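(* Let $G=(V,E)$ be a finite simple undirected graph, $\Gamma$ a subgroup of $\mathrm{Aut}(G)$, and $(G,\mathcal{C})$ the colored graph whose coloring is given by the $\Gamma$-orbits. (i) $(G,\mathcal{C})$ is $2$-path regular (satisfies (M1)) with respect to any ordering of the vertex color classes. (ii) Let $(v_{\sigma_1},\dots,v_{\sigma_p})$ be a perfect elimination ordering of $G$. Set $\eta_1=c(v_{\sigma_1})$; given $\eta_1,\dots,\eta_{k-1}$ for $2\le k\le r$, let $v_k$ be the first vertex in the peo lying in $V\setminus\bigcup_{i=1}^{k-1}V_{\eta_i}$ and set $\eta_k=c(v_k)$. Then $(V_{\eta_1},\dots,V_{\eta_r})$ is a color perfect elimination ordering. (iii) If $G$ is decomposable, then $(G,\mathcal{C})$ is CER with respect to any cpeo. (iv) If $G$ is decomposable and $\Gamma$ is generously transitive or cyclic, then $(G,\mathcal{C})$ is symmetric CER with respect to any cpeo.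
   Context: $\mathrm{Aut}(G)$: permutations $\sigma$ of $V$ with $\sigma(v)\sim\sigma(w)\iff v\sim w$. $\tilde E=E\cup\{\{v\}:v\in V\}$; $\Gamma$ acts by $\sigma\cdot\{v,w\}=\{\sigma(v),\sigma(w)\}$. Orbit coloring: vertex color classes $V_1,\dots,V_r$ are the $\Gamma$-orbits on $V$, edge color classes are the $\Gamma$-orbits on $E$; $c(v,w)$ is the color of $\{v,w\}\in\tilde E$, loops colored by the index of the vertex orbit, $c(v)=c(v,v)$. A vertex is simplicial if its neighbours form a clique; a perfect elimination ordering (peo) $(v_{\sigma_1},\dots,v_{\sigma_p})$ has each $v_{\sigma_k}$ simplicial in $G[\{v_{\sigma_k},\dots,v_{\sigma_p}\}]$. $G$ is decomposable if every induced cycle has length $3$ (equivalently, $G$ has a peo). For an ordering $(V_{\eta_1},\dots,V_{\eta_r})$: it is a color perfect elimination ordering (cpeo) if every $v\in V_{\eta_i}$ is simplicial in $G[V_{\eta_i}\cup\dots\cup V_{\eta_r}]$; $\pi(v)=i$ iff $v\in V_{\eta_i}$, $V_{\le i}=V_{\eta_1}\cup\dots\cup V_{\eta_i}$; for $\{v,w\}\in\tilde E$, $m_{v\to w}(k,h)=|\{u\in V_{\le\min(\pi(v),\pi(w))}: c(v,u)=k, c(u,w)=h\}|$, $m_{v\leftrightarrow w}(k,h)=m_{v\to w}(k,h)+m_{v\to w}(h,k)$; $F_i=\{c(v,w):\{v,w\}\in\tilde E, c(v)=c(w)=i\}$, $F=\bigcup_iF_i$. (M1): $c(v,w)=c(v',w')$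 implies $m_{v\leftrightarrow w}=m_{v'\leftrightarrow w'}$. (M2): $c(v)=c(w)$ implies $m_{v\to w}(k,h)=m_{w\to v}(k,h)$ for all $k,h\in F$. CER with respect to an ordering: cpeo and (M1); symmetric CER: additionally (M2). $\Gamma$ is generously transitive if for every orbit $V_i$ and distinct $a,b\in V_i$ there is $\sigma\in\Gamma$ swapping $a$ and $b$. *)

From mathcomp Require Import all_boot all_fingroup all_solvable.
Set Implicit Arguments. Unset Strict Implicit. Unset Printing Implicit Defensive.

Section ColoredGraph.
Variable T : finType.
Variable adj : rel T.
Variable Gam : {group {perm T}}.

Definition graph_aut : {set {perm T}} :=
  [set s : {perm T} | [forall v, forall w, adj (s v) (s w) == adj v w]].

Definition inEt (v w : T) : bool := (v == w) || adj v w.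

Definition vorbit (v : T) : {set T} := [set s v | s : {perm T} in Gam].
Definition orbits : {set {set T}} := [set vorbit v | v in T].

(* orbit of the (unordered) pair {v,w} under Gamma; for v = w this is the
   orbit of the loop {v}, which corresponds to the vertex orbit of v *)
Definition pcolor (v w : T) : {set {set T}} := [set [set s v; s w] | s : {perm T} in Gam].

Definition ecolor (v w : T) : option {set {set T}} :=
  if inEt v w then Some (pcolor v w) else None.

Definition vcolor (v : T) : {set {set T}} := pcolor v v.

Definition class_ordering (s : seq {set T}) : bool :=
  uniq s && (perm_eq s (enum orbits)).

(* pi(v) (0-based): position of the class of v in the ordering *)
Definition piC (s : seq {set T}) (v : T) : nat := index (vorbit v) s.

Definition simplicial (S : {set T}) (v : T) : Prop :=
  {in S &, forall x y, adj v x -> adj v y -> x != y -> adj x y}.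

Definition cpeo (s : seq {set T}) : Prop :=
  class_ordering s /\
  forall v, simplicial [set u | piC s v <= piC s u] v.

Definition mto (s : seq {set T}) (v w : T) (k h : {set {set T}}) : nat :=
  #|[set u | (piC s u <= minn (piC s v) (piC s w))
             && (ecolor v u == Some k) && (ecolor u w == Some h)]|.

Definition mboth (s : seq {set T}) (v w : T) (k h : {set {set T}}) : nat :=
  mto s v w k h + mto s v w h k.

Definition inF (k : {set {set T}}) : Prop :=
  exists v w, ecolor v w = Some k /\ vcolor v = vcolor w.

Definition M1 (s : seq {set T}) : Prop :=
  forall v w v' w', inEt v w -> inEt v' w' ->
    ecolor v w = ecolor v' w' ->
    forall k h, mboth s v w k h = mboth s v' w' k h.

Definition M2 (s : seq {set T}) : Prop :=
  forall v w, inEt v w -> vcolor v = vcolor w ->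
    forall k h, inF k -> inF h -> mto s v w k h = mto s w v k h.

Definition CER (s : seq {set T}) : Prop := cpeo s /\ M1 s.
Definition symCER (s : seq {set T}) : Prop := CER s /\ M2 s.

Definition peo (p : seq T) : Prop :=
  perm_eq p (enum T) /\
  forall k, k < size p -> forall x0,
    simplicial [set u in drop k p] (nth x0 p k).

Fixpoint eta_order (p : seq T) (k : nat) : seq {set T} :=
  match k with
  | 0 => [::]
  | k'.+1 =>
      let prev := eta_order p k' in
      match [seq v <- p | ~~ has (fun C : {set T} => v \in C) prev] with
      | [::] => prev
      | v :: _ => rcons prev (vorbit v)
      end
  end.

Definition induced_cycle (n : nat) (f : 'I_n -> T) : Prop :=
  3 <= n /\ injective f /\
  forall i j : 'I_n,
    adj (f i) (f j) = (val j == i.+1 %% n) || (val i == j.+1 %% n).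

Definition decomposable : Prop :=
  forall n (f : 'I_n -> T), induced_cycle f -> n = 3.

Definition generously_transitive : Prop :=
  forall a b, b \in vorbit a -> a != b ->
    exists2 s, s \in Gam & s a = b /\ s b = a.

End ColoredGraph.

From mathcomp Require Import all_boot all_fingroup all_solvable.
Set Implicit Arguments. Unset Strict Implicit. Unset Printing Implicit Defensive.

(* The colors are invariant under Gam, and the orbit of a pair {v, w} determines
   (v, w) up to Gam and a swap; as m_{v<->w} is Gam-invariant and symmetric in
   v, w, (M1) holds for every ordering.  The i-th class built from a peo is the
   orbit of the first vertex x_i of the peo outside the earlier classes, so
   every vertex of the remaining classes comes after x_i in the peo; hence x_i
   is simplicial there, and Gam transports this to its whole class.  For (M2),
   with v, w in one orbit, the vertices counted by m_{v->w} are mapped onto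
   those counted by m_{w->v} by an element of Gam swapping v and w, or, when Gam
   is abelian, by r v |-> r^-1 w (r in Gam); the colors in F force the counted
   vertices into the orbit of v. *)

Lemma eq_set2_cases (T : finType) (a b c d : T) :
  [set a; b] = [set c; d] -> (c = a /\ d = b) \/ (c = b /\ d = a).
Proof.
move=> E; have /set2P[] : c \in [set a; b] by rewrite E set21.
all: have /set2P[] : d \in [set a; b] by rewrite E set22.
all: move=> ? ?; subst c d; try by [left | right].
  have : b \in [set a; a] by rewrite -E set22.
  by case/set2P=> ->; left.
have : a \in [set b; b] by rewrite -E set21.
by case/set2P=> ->; left.
Qed.

Lemma index_filter_head (T : eqType) (a : pred T) s x r u :
  [seq y <- s | a y] = x :: r -> u \in s -> a u -> index x s <= index u s.
Proof.
elim: s => //= y s IH; case: ifP => [_ [<-] | ay E]; first by rewrite eqxx.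
have ax : a x by have := mem_head x r; rewrite -E mem_filter => /andP[].
rewrite in_cons => /orP[/eqP uy | us] au; first by rewrite -uy au in ay.
have /negbTE-> : y != x by apply: contraFneq ay => ->.
have /negbTE-> : y != u by apply: contraFneq ay => ->.
exact: IH.
Qed.

Lemma mem_drop_index (T : eqType) (s : seq T) j u :
  u \in s -> j <= index u s -> u \in drop j s.
Proof.
move=> us ju; have := us.
by rewrite -{1}(cat_take_drop j s) mem_cat in_take // ltnNge ju.
Qed.

Lemma uniq_nth_notin_take (T : eqType) (x0 : T) s :
  (forall i, i < size s -> nth x0 s i \notin take i s) -> uniq s.
Proof.
move=> fresh; apply/negPn/negP => /(uniqPn x0)[i [j [ij js Eij]]].
have /negP[] := fresh j js; rewrite -Eij -(nth_take x0 ij) mem_nth //.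
by rewrite size_take js.
Qed.

Section OrbitColoring.
Variables (T : finType) (adj : rel T) (Gam : {group {perm T}}).
Hypotheses (adj_sym : symmetric adj) (Gam_aut : Gam \subset graph_aut adj).

Lemma adj_aut t a b : t \in Gam -> adj (t a) (t b) = adj a b.
Proof.
by move=> /(subsetP Gam_aut); rewrite inE => /forallP/(_ a)/forallP/(_ b)/eqP.
Qed.

Lemma vorbitE v : vorbit Gam v = orbit 'P Gam v.
Proof. by []. Qed.

Lemma setact_set2 (t : {perm T}) (a b : T) : setact 'P [set a; b] t = [set t a; t b].
Proof. by rewrite setactE imsetU1 imset_set1. Qed.

Lemma pcolorE a b : pcolor Gam a b = orbit 'P^* Gam [set a; b].
Proof. by apply: eq_imset => t; rewrite /= setact_set2. Qed.

Lemma pcolor_act t a b : t \in Gam -> pcolor Gam (t a) (t b) = pcolor Gam a b.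
Proof. by move=> tG; rewrite !pcolorE -setact_set2 orbit_act. Qed.

Lemma pcolorC a b : pcolor Gam a b = pcolor Gam b a.
Proof. by rewrite !pcolorE setUC. Qed.

Lemma eq_pcolor_cases v w v' w' : pcolor Gam v w = pcolor Gam v' w' ->
  exists2 t, t \in Gam & (v' = t v /\ w' = t w) \/ (v' = t w /\ w' = t v).
Proof.
rewrite !pcolorE => E; have := orbit_refl 'P^* Gam [set v'; w'].
by rewrite -E => /orbitP[t tG]; rewrite /= setact_set2 => /eq_set2_cases; exists t.
Qed.

Lemma inEtC a b : inEt adj a b = inEt adj b a.
Proof. by rewrite /inEt eq_sym adj_sym. Qed.

Lemma ecolorC a b : ecolor adj Gam a b = ecolor adj Gam b a.
Proof. by rewrite /ecolor inEtC pcolorC. Qed.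

Lemma ecolor_act t a b : t \in Gam -> ecolor adj Gam (t a) (t b) = ecolor adj Gam a b.
Proof. by move=> tG; rewrite /ecolor /inEt (inj_eq perm_inj) adj_aut ?pcolor_act. Qed.

Lemma ecolor_Some a b k : ecolor adj Gam a b = Some k -> pcolor Gam a b = k.
Proof. by rewrite /ecolor; case: ifP => // _ [->]. Qed.

Lemma piC_act s t v : t \in Gam -> piC Gam s (t v) = piC Gam s v.
Proof. by move=> tG; rewrite /piC vorbitE orbit_act. Qed.

Lemma mto_act s t v w k h : t \in Gam ->
  mto adj Gam s (t v) (t w) k h = mto adj Gam s v w k h.
Proof.
move=> tG; rewrite /mto -(card_preimset _ (@perm_inj _ t)); apply: eq_card => u.
by rewrite !inE !piC_act // !ecolor_act.
Qed.

Lemma mtoC s v w k h : mto adj Gam s w v k h = mto adj Gam s v w h k.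
Proof.
rewrite /mto minnC; apply: eq_card => u.
by rewrite !inE (ecolorC w u) (ecolorC u v) -!andbA; congr (_ && _); apply: andbC.
Qed.

Lemma mboth_act s t v w k h : t \in Gam ->
  mboth adj Gam s (t v) (t w) k h = mboth adj Gam s v w k h.
Proof. by move=> tG; rewrite /mboth !mto_act. Qed.

Lemma mbothC s v w k h : mboth adj Gam s w v k h = mboth adj Gam s v w k h.
Proof. by rewrite /mboth (mtoC s v w k h) (mtoC s v w h k) addnC. Qed.

Lemma M1_orbit_coloring s : M1 adj Gam s.
Proof.
move=> v w v' w' vw v'w'; rewrite /ecolor vw v'w' => -[/eq_pcolor_cases[t tG]].
by case=> -[-> ->] k h; rewrite mboth_act // mbothC.
Qed.

Lemma vcolor_eq_orbit v w : vcolor Gam v = vcolor Gam w -> w \in vorbit Gam v.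
Proof. by case/eq_pcolor_cases=> t tG [[_ ->]|[_ ->]]; apply: (mem_orbit 'P v tG). Qed.

Lemma inF_orbit k v u : inF adj Gam k -> ecolor adj Gam v u = Some k -> u \in vorbit Gam v.
Proof.
case=> a [b [/ecolor_Some <- /vcolor_eq_orbit]]; rewrite !vorbitE => /orbit_eqP ba.
case/ecolor_Some/eq_pcolor_cases=> t tG [][ta tb]; move: ba; rewrite ta tb !orbit_act //.
  by move/orbit_eqP.
by move/orbit_eqP; rewrite orbit_sym.
Qed.

Lemma M2_generously_transitive s : generously_transitive Gam -> M2 adj Gam s.
Proof.
move=> Ggt v w _ /vcolor_eq_orbit wv k h _ _.
have [-> // | vw] := eqVneq v w.
have [t tG [tv tw]] := Ggt v w wv vw.
by rewrite -(mto_act s v w k h tG) tv tw.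
Qed.

Definition mover v u : {perm T} := repr (amove 'P Gam v u).

Lemma moverP v u : u \in vorbit Gam v -> mover v u \in Gam /\ mover v u v = u.
Proof.
rewrite vorbitE => /orbitP[t tG <-{u}] /=.
have /mem_repr : t \in amove 'P Gam v (t v) by rewrite inE tG eqxx.
by rewrite inE => /andP[-> /eqP].
Qed.

Lemma mto_abelian_le s v w k h : abelian Gam -> w \in vorbit Gam v -> inF adj Gam k ->
  mto adj Gam s v w k h <= mto adj Gam s w v k h.
Proof.
rewrite vorbitE => Gab /orbitP[tau tauG <-{w}] /= Fk.
have commG a b x : a \in Gam -> b \in Gam -> a (b x) = b (a x).
  by move=> aG bG; rewrite -!permM (centsP Gab _ aG _ bG).
rewrite /mto; set A := [set u | _].
have moverA u : u \in A -> mover v u \in Gam /\ mover v u v = u.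
  by rewrite !inE => /andP[/andP[_ /eqP/(inF_orbit Fk)/moverP]].
pose f u := (mover v u)^-1%g (tau v).
rewrite -(card_in_imset (f := f)).
  apply/subset_leq_card/subsetP => _ /imsetP[u uA ->].
  have [rG ru] := moverA u uA; move: uA; rewrite /f; move: (mover v u) rG ru => r rG <-{u}.
  rewrite !inE !piC_act ?groupV // minnn leqnn /= => /andP[/eqP vr /eqP rw].
  apply/andP; split; apply/eqP.
    rewrite (commG _ tau) ?groupV // ecolor_act // -(ecolor_act _ _ rG) permKV.
    by rewrite ecolorC.
  by rewrite -{2}(permK r v) ecolor_act ?groupV // ecolorC.
move=> u1 u2 /moverA[r1G r1v] /moverA[r2G r2v]; rewrite /f => E; rewrite -r1v -r2v.
move: (mover v u1) (mover v u2) r1G r2G E => r1 r2 r1G r2G.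
rewrite !(commG _ tau) ?groupV // => /perm_inj E.
by rewrite -{1}(permKV r2 v) -E commG // permKV.
Qed.

Lemma M2_abelian s : abelian Gam -> M2 adj Gam s.
Proof.
move=> Gab v w _ /vcolor_eq_orbit wv k h Fk _.
have vw : v \in vorbit Gam w by rewrite vorbitE orbit_sym.
by apply/anti_leq; rewrite !mto_abelian_le.
Qed.

Definition covers (S : seq {set T}) (v : T) := has (fun C : {set T} => v \in C) S.

Lemma coversE S v : {subset S <= orbits Gam} -> covers S v = (vorbit Gam v \in S).
Proof.
move=> SG; apply/hasP/idP => [[C CS vC] | vS]; last first.
  by exists (vorbit Gam v); rewrite // vorbitE orbit_refl.
have /imsetP[x _ Cx] := SG C CS; move: vC; rewrite Cx vorbitE => /orbit_eqP vx.
by rewrite Cx in CS; rewrite vorbitE vx.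
Qed.

Section EtaOrder.
Variable p : seq T.
Hypothesis p_total : forall u, u \in p.

Lemma nth_eta_order k i : i < size (eta_order Gam p k) ->
  exists x, let S := take i (eta_order Gam p k) in
  [/\ nth set0 (eta_order Gam p k) i = vorbit Gam x, ~~ covers S x &
      forall u, ~~ covers S u -> index x p <= index u p].
Proof.
elim: k i => [//|k IH] i /=; set S := eta_order Gam p k in IH *; clearbody S.
case E: (filter _ p) => [|x r]; first exact: IH.
rewrite size_rcons ltnS leq_eqVlt -cats1 => /orP[/eqP-> | iS].
  rewrite take_size_cat // nth_cat ltnn subnn; exists x; split=> [//||u].
    by have := mem_head x r; rewrite -E mem_filter => /andP[].
  exact: index_filter_head E (p_total u).
by rewrite takel_cat ?(ltnW iS) // nth_cat iS; apply: IH.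
Qed.

Lemma eta_order_orbits k : {subset eta_order Gam p k <= orbits Gam}.
Proof.
move=> C /(nthP set0)[i iS <-]; have [x [-> _ _]] := nth_eta_order iS.
exact: imset_f.
Qed.

Lemma eta_order_uniq k : uniq (eta_order Gam p k).
Proof.
apply: (uniq_nth_notin_take (x0 := set0)) => i iS; have [x [-> ] ] := nth_eta_order iS.
by rewrite coversE // => C /mem_take/eta_order_orbits.
Qed.

Lemma eta_order_size k :
  (exists u, ~~ covers (eta_order Gam p k) u) -> size (eta_order Gam p k) = k.
Proof.
elim: k => [//|k IH] /=; set S := eta_order Gam p k.
case E: (filter _ p) => [|x r] [u uS].
  by have : u \in [::] by rewrite -E mem_filter uS p_total.
rewrite size_rcons IH //; exists u; apply: contra uS.
by rewrite /covers -cats1 has_cat => ->.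
Qed.

Lemma eta_order_class_ordering : class_ordering Gam (eta_order Gam p #|orbits Gam|).
Proof.
set S := eta_order Gam p _; have Sorb : {subset S <= orbits Gam} := @eta_order_orbits _.
apply/andP; split; first exact: eta_order_uniq.
apply: uniq_perm; rewrite ?eta_order_uniq ?enum_uniq //.
case: (pickP (fun u => ~~ covers S u)) => [u uS | Scov].
  have Senum : {subset S <= enum (orbits Gam)} by move=> C /Sorb; rewrite mem_enum.
  have Ssize : size (enum (orbits Gam)) <= size S.
    by rewrite eta_order_size -?cardE //; exists u.
  exact: (uniq_min_size (eta_order_uniq _) Senum Ssize).2.
move=> C; rewrite mem_enum; apply/idP/imsetP => [/Sorb/imsetP // | [v _ ->]].
by rewrite -coversE //; apply/negPn/negbT/Scov.
Qed.

End EtaOrder.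

Lemma simplicial_act t (A B : {set T}) x : t \in Gam -> {in B, forall u, t^-1%g u \in A} ->
  simplicial adj A x -> simplicial adj B (t x).
Proof.
move=> tG BA xA a b aB bB xa xb ab.
rewrite -(permKV t a) -(permKV t b) adj_aut //; apply: xA; rewrite ?BA //.
- by rewrite -(adj_aut _ _ tG) permKV.
- by rewrite -(adj_aut _ _ tG) permKV.
by rewrite (inj_eq perm_inj).
Qed.

Lemma cpeo_eta_order p : peo adj p -> cpeo adj Gam (eta_order Gam p #|orbits Gam|).
Proof.
case=> /perm_mem pT p_simp; have p_total u : u \in p by rewrite pT mem_enum.
have S_ord := eta_order_class_ordering p_total.
set S := eta_order Gam p _ in S_ord *; split=> // v.
have inS u : vorbit Gam u \in S.
  by case/andP: S_ord => _ /perm_mem->; rewrite mem_enum imset_f.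
set i := piC Gam S v; have i_lt : i < size S by rewrite /i /piC index_mem.
have [x [Sx _ x_first]] := nth_eta_order p_total i_lt.
have /orbitP[t tG /= tx] : v \in orbit 'P Gam x.
  by rewrite -vorbitE -Sx /i /piC nth_index // vorbitE orbit_refl.
rewrite -tx.
apply: (simplicial_act (A := [set u in drop (index x p) p]) tG) => [u|].
  rewrite !inE => le_u; apply/mem_drop_index/x_first => //.
  rewrite coversE ?in_take // => [|C /mem_take /(eta_order_orbits p_total) //].
  by rewrite -leqNgt -/(piC Gam S _) piC_act ?groupV.
have x_lt : index x p < size p by rewrite index_mem.
by have := p_simp _ x_lt x; rewrite nth_index.
Qed.

End OrbitColoring.

Theorem lemma3p11 (T : finType) (adj : rel T) (Gam : {group {perm T}}) :
  symmetric adj -> irreflexive adj -> Gam \subset graph_aut adj ->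
  [/\ (forall s, class_ordering Gam s -> M1 adj Gam s),
      (forall p, peo adj p -> cpeo adj Gam (eta_order Gam p #|orbits Gam|)),
      (decomposable adj -> forall s, cpeo adj Gam s -> CER adj Gam s) &
      (decomposable adj -> generously_transitive Gam \/ cyclic Gam ->
         forall s, cpeo adj Gam s -> symCER adj Gam s)].
Proof.
(* Decomposability only guarantees that a cpeo exists. *)
move=> adj_sym _ Gam_aut; split.
- by move=> s _; apply: M1_orbit_coloring.
- exact: cpeo_eta_order.
- by move=> _ s s_cpeo; split; last exact: M1_orbit_coloring.
move=> _ Gam_gt_cyc s s_cpeo; split; first by split; last exact: M1_orbit_coloring.
case: Gam_gt_cyc => [Ggt | /cyclic_abelian Gab].
  exact: M2_generously_transitive.
exact: M2_abelian.
Qed.
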